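(* For every $n\ge2$, the Lie group of invertible $n\times n$ upper triangular real matrices has the topological $R_\infty$-property.
   Context: For an automorphism $\varphi$ of a group $G$, the $\varphi$-twisted conjugacy classes are the equivalence classes of the relation $x\sim_\varphi y$ iff $y=gx\varphi(g)^{-1}$ for some $g\in G$; $R(\varphi)\in\mathbb{N}\cup\{\infty\}$ is their number. A topological group $G$ has the topological $R_\infty$-property if $R(\varphi)=\infty$ for every automorphism $\varphi$ of $G$ that is a homeomorphism (for a Lie group: every continuous automorphism). *)

From HB Require Import structures.
From mathcomp Require Import all_boot all_order all_algebra.
From mathcomp Require Import all_classical all_reals all_analysis.
Set Implicit Arguments. Unset Strict Implicit. Unset Printing Implicit Defensive.
Import Order.TTheory GRing.Theory Num.Theory.
Import numFieldNormedType.Exports.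
Local Open Scope classical_set_scope.
Local Open Scope ring_scope.

Definition upper_triangular (R : pzRingType) (n : nat) (A : 'M[R]_n) : Prop :=
  forall i j : 'I_n, (j < i)%N -> A i j = 0.

Definition UT (R : comUnitRingType) (n : nat) : set 'M[R]_n :=
  [set A | upper_triangular A /\ A \in unitmx].

Definition topological_automorphism (R : realType) (n : nat)
    (G : set 'M[R]_n) (phi : 'M[R]_n -> 'M[R]_n) : Prop :=
  [/\ (forall x, G x -> G (phi x)),
      (forall x y, G x -> G y -> phi (x *m y) = phi x *m phi y),
      {within G, continuous phi} &
      exists psi : 'M[R]_n -> 'M[R]_n,
        [/\ (forall x, G x -> G (psi x)),
            (forall x, G x -> psi (phi x) = x),
            (forall x, G x -> phi (psi x) = x) &
            {within G, continuous psi}]].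

Definition twisted_conj (R : realType) (n : nat) (G : set 'M[R]_n)
    (phi : 'M[R]_n -> 'M[R]_n) (x y : 'M[R]_n) : Prop :=
  exists2 g, G g & y = g *m x *m invmx (phi g).

Definition twisted_classes (R : realType) (n : nat) (G : set 'M[R]_n)
    (phi : 'M[R]_n -> 'M[R]_n) : set (set 'M[R]_n) :=
  [set [set y | G y /\ twisted_conj G phi x y] | x in G].

Definition Reidemeister_infinite (R : realType) (n : nat) (G : set 'M[R]_n)
    (phi : 'M[R]_n -> 'M[R]_n) : Prop :=
  ~ finite_set (twisted_classes G phi).

Definition top_R_infty (R : realType) (n : nat) (G : set 'M[R]_n) : Prop :=
  forall phi : 'M[R]_n -> 'M[R]_n,
    topological_automorphism G phi -> Reidemeister_infinite G phi.

(* The ratio [diag_ratio A = A_00 / A_(n-1)(n-1)] is a character of T_n that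
   takes infinitely many values; it suffices to show [diag_ratio \o phi =
   diag_ratio] for every continuous automorphism [phi], for then it is
   constant on phi-twisted classes.  Diagonal entries of a unitriangular
   matrix [u] are limits of those of conjugates of [u] tending to 1, so [phi]
   preserves the unitriangular subgroup and hence its centre, the
   transvections [1 + t E_0(n-1)].  The induced map [tau] on [R] is additive
   and satisfies [tau (diag_ratio h * t) = diag_ratio (phi h) * tau t];
   thus [tau / tau 1] is a ring endomorphism of the reals, i.e. the identity,
   which forces [diag_ratio (phi h) = diag_ratio h]. *)

From mathcomp Require Import all_boot all_order all_algebra.
From mathcomp Require Import all_classical all_reals all_analysis.
From mathcomp Require Import lra.
Set Implicit Arguments. Unset Strict Implicit. Unset Printing Implicit Defensive.
Import Order.TTheory GRing.Theory Num.Theory.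
Import numFieldNormedType.Exports.
Local Open Scope classical_set_scope.
Local Open Scope ring_scope.

Lemma mul_delta_mxE (R : pzSemiRingType) n (i j k l : 'I_n) (A : 'M[R]_n) :
  (delta_mx i j *m A) k l = (k == i)%:R * A j l.
Proof.
rewrite mxE (bigD1 j) //= big1 ?addr0; first by rewrite mxE eqxx andbT.
by move=> p /negbTE pj; rewrite mxE pj andbF mul0r.
Qed.

Lemma mul_mx_deltaE (R : pzSemiRingType) n (i j k l : 'I_n) (A : 'M[R]_n) :
  (A *m delta_mx i j) k l = A k i * (l == j)%:R.
Proof.
rewrite mxE (bigD1 i) //= big1 ?addr0; first by rewrite mxE eqxx.
by move=> p /negbTE pj; rewrite mxE pj mulr0.
Qed.

Definition unitriangular (R : pzRingType) (n : nat) : set 'M[R]_n :=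
  [set A | upper_triangular A /\ forall k, A k k = 1].

Section UpperTriangular.
Variables (R : comUnitRingType) (n : nat).
Implicit Types A B : 'M[R]_n.

Lemma upper_triangular_diag (d : 'rV[R]_n) : upper_triangular (diag_mx d).
Proof. by move=> i j ji; rewrite mxE -val_eqE /= gtn_eqF. Qed.

Lemma upper_triangular_mul A B :
  upper_triangular A -> upper_triangular B -> upper_triangular (A *m B).
Proof.
move=> uA uB i j ji; rewrite mxE big1 // => l _.
case: (ltnP l i) => li; first by rewrite uA // mul0r.
by rewrite uB ?mulr0 //; exact: leq_trans ji li.
Qed.

Lemma upper_triangular_mul_diag A B k :
  upper_triangular A -> upper_triangular B -> (A *m B) k k = A k k * B k k.
Proof.
move=> uA uB; rewrite mxE (bigD1 k) //= big1 ?addr0 // => l lk.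
case: (ltngtP l k) => [lk'|kl|/val_inj lk']; first by rewrite uA // mul0r.
  by rewrite uB ?mulr0.
by rewrite lk' eqxx in lk.
Qed.

Lemma det_upper_triangular A : upper_triangular A -> \det A = \prod_i A i i.
Proof.
move=> uA; rewrite -det_tr det_trig; first by apply: eq_bigr => i _; rewrite mxE.
by apply/is_trig_mxP => i j ij; rewrite mxE uA.
Qed.

Lemma UT_mul A B : UT A -> UT B -> UT (A *m B).
Proof.
move=> [uA A_unit] [uB B_unit]; split; first exact: upper_triangular_mul.
by rewrite unitmx_mul A_unit B_unit.
Qed.

Lemma UT1 : UT (1%:M : 'M[R]_n).
Proof.
by split; rewrite ?unitmx1 // -diag_const_mx; exact: upper_triangular_diag.
Qed.

Lemma unitriangular_UT A : unitriangular A -> UT A.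
Proof.
move=> [uA dA]; split=> //.
by rewrite unitmxE det_upper_triangular // big1 ?unitr1.
Qed.

End UpperTriangular.

Lemma UT_diag (F : fieldType) n (d : 'rV[F]_n) :
  (forall k, d 0 k != 0) -> UT (diag_mx d).
Proof.
move=> d_neq0; split; first exact: upper_triangular_diag.
by rewrite unitmxE unitfE det_diag; apply/prodf_neq0 => i _.
Qed.

Lemma UT_diag_neq0 (F : fieldType) n (A : 'M[F]_n) k : UT A -> A k k != 0.
Proof.
move=> [uA]; rewrite unitmxE unitfE det_upper_triangular //.
by rewrite (bigD1 k) //= mulf_eq0 negb_or => /andP[].
Qed.

Definition diag_ratio {F : fieldType} {n} (A : 'M[F]_n.+1) : F :=
  A ord0 ord0 / A ord_max ord_max.

Lemma diag_ratioM (F : fieldType) n (A B : 'M[F]_n.+1) :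
  upper_triangular A -> upper_triangular B ->
  diag_ratio (A *m B) = diag_ratio A * diag_ratio B.
Proof.
by move=> uA uB; rewrite /diag_ratio !upper_triangular_mul_diag // invfM mulrACA.
Qed.

Lemma diag_ratio_neq0 (F : fieldType) n (A : 'M[F]_n.+1) :
  UT A -> diag_ratio A != 0.
Proof. by move=> UA; rewrite mulf_neq0 ?invr_neq0 ?UT_diag_neq0. Qed.

Definition diag_corner (F : fieldType) m (a : F) : 'M[F]_m.+2 :=
  diag_mx (\row_k if k == ord0 then a else 1).

Lemma UT_diag_corner (F : fieldType) m (a : F) : a != 0 -> UT (diag_corner m a).
Proof.
by move=> a_neq0; apply: UT_diag => k; rewrite mxE; case: ifP; rewrite ?oner_neq0.
Qed.

Lemma diag_ratio_corner (F : fieldType) m (a : F) :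
  diag_ratio (diag_corner m a) = a.
Proof. by rewrite /diag_ratio !mxE /= eqxx divr1. Qed.

Lemma upper_triangular_conj_diag (F : fieldType) n (d x y : 'M[F]_n) k :
  upper_triangular d -> upper_triangular x -> upper_triangular y ->
  d k k != 0 -> d *m y = x *m d -> y k k = x k k.
Proof.
move=> ud ux uy dk_neq0 dyxd; apply: (mulfI dk_neq0).
by rewrite -upper_triangular_mul_diag // dyxd upper_triangular_mul_diag // mulrC.
Qed.

Lemma cvg_mx_entries (K : topologicalType) m n T (F : set_system T)
    {FF : Filter F} (f : T -> 'M[K]_(m, n)) (M : 'M[K]_(m, n)) :
  (forall i j, f x i j @[x --> F] --> M i j) -> f @ F --> M.
Proof.
move=> f_cvg A [P P_nbhs sPA].
have : \forall x \near F, forall ij : 'I_m * 'I_n, P ij.1 ij.2 (f x ij.1 ij.2).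
  by apply: filter_forall => -[i j]; exact: f_cvg.
by apply: filterS => x Px; apply: sPA => i j; exact: (Px (i, j)).
Qed.

Section Dilation.
Variables (R : realType) (n : nat).
Implicit Types u : 'M[R]_n.

Definition dilate u (s : R) : 'M[R]_n := \matrix_(i, j) (s ^+ (j - i) * u i j).

Definition power_diag (s : R) : 'M[R]_n := diag_mx (\row_k s ^+ k).

Lemma UT_power_diag s : s != 0 -> UT (power_diag s).
Proof. by move=> s_neq0; apply: UT_diag => k; rewrite mxE expf_neq0. Qed.

Lemma power_diag_dilate u s :
  upper_triangular u -> power_diag s *m dilate u s = u *m power_diag s.
Proof.
move=> uu; rewrite mul_diag_mx mul_mx_diag; apply/matrixP => i j; rewrite !mxE.
case: (leqP i j) => ij; last by rewrite uu ?mulr0 ?mul0r.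
by rewrite mulrA -exprD subnKC // mulrC.
Qed.

Lemma dilate_unitriangular u s : unitriangular u -> unitriangular (dilate u s).
Proof.
move=> [uu du]; split=> [i j ji|k]; rewrite mxE; first by rewrite uu ?mulr0.
by rewrite subnn expr0 mul1r du.
Qed.

Lemma dilate0 u : unitriangular u -> dilate u 0 = 1%:M.
Proof.
move=> [uu du]; apply/matrixP => i j; rewrite !mxE expr0n.
case: (ltngtP j i) => [ji|ij|/val_inj ji].
- by rewrite uu ?mulr0 // -val_eqE /= gtn_eqF.
- by rewrite eqn0Ngt subn_gt0 ij mul0r -val_eqE /= ltn_eqF.
- by rewrite ji subnn !eqxx du mul1r.
Qed.

Lemma dilate_continuous u : continuous (dilate u).
Proof.
move=> s; apply: cvg_mx_entries => i j; rewrite mxE.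
under eq_fun do rewrite mxE.
exact: cvgMr_tmp (@exprn_continuous R (j - i)%N s).
Qed.

End Dilation.

Section Endomorphism.
Variables (R : realType) (n : nat) (f : 'M[R]_n -> 'M[R]_n).
Hypothesis f_UT : forall x, UT x -> UT (f x).
Hypothesis fM : forall x y, UT x -> UT y -> f (x *m y) = f x *m f y.

Lemma endo_mx1 : f 1%:M = 1%:M.
Proof.
have [_ f1_unit] := f_UT (UT1 R n).
have /(congr1 (mulmx (invmx (f 1%:M)))) := fM (UT1 R n) (UT1 R n).
by rewrite mulmx1 mulVmx // mulKmx.
Qed.

Lemma endo_diag_conj d x y k :
  UT d -> UT x -> UT y -> d *m y = x *m d -> f y k k = f x k k.
Proof.
move=> Ud Ux Uy dyxd; have f_d := f_UT Ud.
apply: (upper_triangular_conj_diag (d := f d)); rewrite ?(UT_diag_neq0 k) //.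
- by case: f_d.
- by case: (f_UT Ux).
- by case: (f_UT Uy).
by rewrite -!fM // dyxd.
Qed.

Hypothesis f_cont : {within UT (R:=R) (n:=n), continuous f}.

(* [dilate u s] is conjugate to [u] for [s != 0], so the diagonal of
   [f (dilate u s)] does not depend on [s]; by continuity it is that of
   [f 1 = 1]. *)
Lemma endo_unitriangular u : unitriangular u -> unitriangular (f u).
Proof.
move=> Uu; split=> [|k]; first by case: (f_UT (unitriangular_UT Uu)).
have UTd s : UT (dilate u s) by exact/unitriangular_UT/dilate_unitriangular.
have diag_const s : s != 0 -> f (dilate u s) k k = f u k k.
  move=> s_neq0; apply: (endo_diag_conj k (UT_power_diag n s_neq0)) => //.
    exact: unitriangular_UT.
  by rewrite power_diag_dilate //; case: Uu.
have dilate_cvg :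
    dilate u s @[s --> (0 : R)] --> within (@UT R n) (nbhs (1%:M : 'M[R]_n)).
  rewrite -(dilate0 Uu) => A A_nbhs.
  apply: (@filterS _ _ _ (fun s => UT (dilate u s) -> A (dilate u s))).
    by move=> s /(_ (UTd s)).
  exact: (@dilate_continuous R n u 0 _ A_nbhs).
have f_cvg := (subspace_continuousP _ _).1 f_cont _ (UT1 R n).
have diag_cvg : f (dilate u s) k k @[s --> (0 : R)] --> (1 : R).
  have -> : (1 : R) = f 1%:M k k by rewrite endo_mx1 mxE eqxx.
  exact: cvg_comp _ _ (cvg_comp _ _ dilate_cvg f_cvg)
    (@coord_continuous R n n k k _).
have diag_dcvg : (fun s => f (dilate u s) k k) @ (0 : R)^' --> (1 : R).
  exact: (cvg_within_filter (F := nbhs (0 : R)) (fun s : R => s != 0) diag_cvg).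
have diag_const_cvg : (fun s => f (dilate u s) k k) @ (0 : R)^' --> f u k k.
  apply: cvg_trans (near_eq_cvg _) (cvg_cst _).
  by near=> s; rewrite /= diag_const //; near: s; exact: nbhs_dnbhs_neq.
exact: (cvg_unique (@Rhausdorff R) diag_const_cvg diag_dcvg).
Unshelve. all: by end_near.
Qed.

End Endomorphism.

Lemma unitriangular_elementary (R : pzRingType) n (i j : 'I_n) :
  (i < j)%N -> unitriangular (1%:M + delta_mx i j : 'M[R]_n).
Proof.
move=> ij; split=> [a b ba|a]; rewrite !mxE.
  rewrite -val_eqE /= gtn_eqF // add0r.
  case: eqP => [ai|]; case: eqP => [bj|] //=; rewrite ai bj in ba.
  by have := ltn_trans ij ba; rewrite ltnn.
rewrite eqxx; case: eqP => [->|] /=; last by rewrite addr0.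
by rewrite -val_eqE /= ltn_eqF // addr0.
Qed.

Section Transvection.
Variables (F : fieldType) (m : nat).
Local Notation N := m.+2.
Local Notation E := (delta_mx (@ord0 m.+1) (@ord_max m.+1) : 'M[F]_N).
Implicit Types (u w : 'M[F]_N) (s t : F).

Definition transv t : 'M[F]_N := 1%:M + t *: E.

Lemma transvE t : transv t ord0 ord_max = t.
Proof. by rewrite !mxE /= eqxx mulr1 add0r. Qed.

Lemma transvD s t : transv s *m transv t = transv (s + t).
Proof.
rewrite /transv mulmxDl !mulmxDr !mul1mx mulmx1 -scalemxAl -scalemxAr.
by rewrite mul_delta_mx_cond /= mulr0n !scaler0 addr0 scalerDl addrA addrAC.
Qed.

Lemma transv_unitriangular t : unitriangular (transv t).
Proof.
split=> [i j ji|k]; rewrite !mxE.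
  have j_max : (j == ord_max) = false.
    by rewrite -val_eqE /= ltn_eqF // (leq_trans ji) // -ltnS ltn_ord.
  by rewrite -val_eqE /= gtn_eqF // j_max andbF mulr0 addr0.
by rewrite eqxx; case: eqP => [->|] /=; rewrite ?mulr0 ?addr0.
Qed.

Lemma UT_transv t : UT (transv t).
Proof. exact/unitriangular_UT/transv_unitriangular. Qed.

Lemma delta_mx_mul_unitriangular u :
  unitriangular u -> E *m u = E.
Proof.
move=> [uu du]; apply/matrixP => k l; rewrite mul_delta_mxE mxE.
have [->|l_max] := eqVneq l ord_max; first by rewrite du mulr1 andbT.
by rewrite andbF uu ?mulr0 //= ltn_neqAle -ltnS ltn_ord andbT.
Qed.

Lemma unitriangular_mul_delta_mx u :
  unitriangular u -> u *m E = E.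
Proof.
move=> [uu du]; apply/matrixP => k l; rewrite mul_mx_deltaE mxE.
have [->|k0] := eqVneq k ord0; first by rewrite du mul1r.
by rewrite uu ?mul0r // lt0n.
Qed.

Lemma transv_centralizes t u :
  unitriangular u -> transv t *m u = u *m transv t.
Proof.
move=> Uu; rewrite /transv mulmxDl mulmxDr mul1mx mulmx1 -scalemxAl -scalemxAr.
by rewrite delta_mx_mul_unitriangular // unitriangular_mul_delta_mx.
Qed.

Lemma transv_conj h t : UT h -> h *m transv t = transv (diag_ratio h * t) *m h.
Proof.
move=> Uh; have [uh _] := Uh.
rewrite /transv mulmxDl mulmxDr mul1mx mulmx1 -scalemxAl -scalemxAr.
suff -> : h *m E = diag_ratio h *: (E *m h).
  by rewrite scalerA mulrC.
apply/matrixP => k l; rewrite mul_mx_deltaE [in RHS]mxE mul_delta_mxE.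
have [->|k0] := eqVneq k ord0; last by rewrite uh ?mul0r ?mulr0 // lt0n.
have [->|l_max] := eqVneq l ord_max.
  by rewrite mulr1 mul1r /diag_ratio divfK // UT_diag_neq0.
by rewrite !mulr0 mul1r uh ?mulr0 //= ltn_neqAle -ltnS ltn_ord andbT.
Qed.

Lemma unitriangular_center w :
  unitriangular w -> (forall u, unitriangular u -> w *m u = u *m w) ->
  w = transv (w ord0 ord_max).
Proof.
move=> [uw dw] w_central.
have w_delta (i j k l : 'I_N) :
    (i < j)%N -> w k i * (l == j)%:R = (k == i)%:R * w j l.
  move=> ij; have := w_central _ (unitriangular_elementary F ij).
  rewrite mulmxDr mulmxDl mulmx1 mul1mx => /addrI wd.
  by rewrite -mul_mx_deltaE wd mul_delta_mxE.
apply/matrixP => k l; rewrite !mxE.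
have [lk|kl|/val_inj->] := ltngtP l k; last first.
- by rewrite dw eqxx; case: eqP => [->|] /=; rewrite ?mulr0 ?addr0.
- rewrite -val_eqE /= ltn_eqF // add0r.
  have [->|l_max] := eqVneq l ord_max; last first.
    have l_lt : (l < @ord_max m.+1)%N.
      by rewrite /= ltn_neqAle -ltnS ltn_ord andbT.
    have := w_delta _ _ k ord_max l_lt; rewrite eqxx mulr1 => ->.
    by rewrite -val_eqE /= ltn_eqF // mul0r andbF mulr0.
  have [->|k0] := eqVneq k ord0; first by rewrite mulr1.
  have k_gt0 : (@ord0 m.+1 < k)%N by rewrite lt0n.
  have := w_delta _ _ ord0 ord_max k_gt0; rewrite eqxx mul1r => <-.
  by rewrite -val_eqE /= gtn_eqF ?mulr0 // (leq_trans kl) // -ltnS ltn_ord.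
have l_max : (l == ord_max) = false.
  by rewrite -val_eqE /= ltn_eqF // (leq_trans lk) // -ltnS ltn_ord.
by rewrite uw // -val_eqE /= gtn_eqF // l_max andbF mulr0 addr0.
Qed.

End Transvection.

Lemma archi_le0 (R : realType) (e : R) :
  (forall k : nat, k%:R * e <= 1) -> e <= 0.
Proof.
move=> e_bounded; rewrite leNgt; apply/negP => e_gt0.
have := e_bounded (Num.Def.archi_bound e^-1); rewrite leNgt => /negP; apply.
by rewrite -ltr_pdivrMr // div1r archi_boundP // invr_ge0 ltW.
Qed.

(* Squares go to squares, so a ring endomorphism of [R] is nondecreasing and
   fixes the integers; the floor of [k * x] then pins [g x] to within
   [1 / k] of [x]. *)
Lemma real_ring_endo_id (R : realType) (g : R -> R) :
  {morph g : x y / x + y} -> {morph g : x y / x * y} -> g 1 = 1 -> g =1 id.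
Proof.
move=> gD gM g1.
have g0 : g 0 = 0 by apply: (addIr (g 0)); rewrite -gD !add0r.
have gN x : g (- x) = - g x by apply/eqP; rewrite -addr_eq0 -gD addNr g0.
have g_ge0 x : 0 <= x -> 0 <= g x.
  by move=> x_ge0; rewrite -(sqr_sqrtr x_ge0) expr2 gM -expr2 sqr_ge0.
have g_nondecr x y : x <= y -> g x <= g y.
  by move=> xy; rewrite -subr_ge0 -gN -gD g_ge0 // subr_ge0.
have g_nat k : g k%:R = k%:R.
  by elim: k => [|k IHk]; rewrite ?g0 // -addn1 natrD gD IHk g1.
have g_int (z : int) : g z%:~R = z%:~R.
  by case: z => k; rewrite ?NegzE ?mulrNz -pmulrn ?gN g_nat.
move=> x /=; apply/eqP; rewrite -subr_eq0 -normr_le0; apply: archi_le0 => k.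
set fl := Num.floor (k%:R * x).
have fl_le : fl%:~R <= k%:R * x by apply: floor_le.
have lt_fl1 : k%:R * x < (fl + 1)%:~R by rewrite -floor_lt_int ltrDl.
have gkx : g (k%:R * x) = k%:R * g x by rewrite gM g_nat.
have fl_le_g : fl%:~R <= k%:R * g x by rewrite -gkx -(g_int fl) g_nondecr.
have g_le_fl1 : k%:R * g x <= (fl + 1)%:~R.
  by rewrite -gkx -(g_int (fl + 1)) g_nondecr // ltW.
rewrite intrD mulr1z in lt_fl1 g_le_fl1.
rewrite -[k%:R]ger0_norm // -normrM ler_norml mulrBr; lra.
Qed.

Section Automorphism.
Variables (R : realType) (m : nat) (phi psi : 'M[R]_m.+2 -> 'M[R]_m.+2).
Local Notation G := (@UT R m.+2).
Hypothesis phi_UT : forall x, G x -> G (phi x).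
Hypothesis phiM : forall x y, G x -> G y -> phi (x *m y) = phi x *m phi y.
Hypothesis phi_cont : {within G, continuous phi}.
Hypothesis psi_UT : forall x, G x -> G (psi x).
Hypothesis phiK : forall x, G x -> psi (phi x) = x.
Hypothesis psiK : forall x, G x -> phi (psi x) = x.
Hypothesis psi_cont : {within G, continuous psi}.

Lemma psiM x y : G x -> G y -> psi (x *m y) = psi x *m psi y.
Proof.
move=> Gx Gy; have Gpx := psi_UT Gx; have Gpy := psi_UT Gy.
by rewrite -{1}(psiK Gx) -{1}(psiK Gy) -phiM // phiK //; exact: UT_mul.
Qed.

Lemma phi_unitriangular u : unitriangular u -> unitriangular (phi u).
Proof. exact: endo_unitriangular. Qed.

Lemma psi_unitriangular u : unitriangular u -> unitriangular (psi u).
Proof. exact: (endo_unitriangular psi_UT psiM). Qed.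

Definition tau t := phi (transv m t) ord0 ord_max.

Lemma phi_transv t : phi (transv m t) = transv m (tau t).
Proof.
have G_transv := @UT_transv R m.
apply: unitriangular_center; first exact/phi_unitriangular/transv_unitriangular.
move=> u Uu.
have Gu := unitriangular_UT Uu; have G_psi_u := psi_UT Gu.
rewrite -(psiK Gu) -!phiM // transv_centralizes //; exact: psi_unitriangular.
Qed.

Lemma tauD s t : tau (s + t) = tau s + tau t.
Proof.
have G_transv := @UT_transv R m.
rewrite -[LHS](transvE m) -phi_transv -transvD phiM //.
by rewrite !phi_transv transvD transvE.
Qed.

Lemma tau1_neq0 : tau 1 != 0.
Proof.
apply/eqP => tau1_0.
have G_transv1 := @UT_transv R m 1.
have : phi (transv m 1) = phi 1%:M.
  by rewrite phi_transv tau1_0 (endo_mx1 phi_UT phiM) /transv scale0r addr0.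
have G1 := UT1 R m.+2.
move/(congr1 psi); rewrite !phiK // => transv1_eq1.
have := transvE m (1 : R); rewrite transv1_eq1 mxE /= => /eqP.
by rewrite eq_sym oner_eq0.
Qed.

Lemma tau_conj h t : G h -> tau (diag_ratio h * t) = diag_ratio (phi h) * tau t.
Proof.
move=> Gh; have G_transv := @UT_transv R m.
have /(congr1 phi) := transv_conj t Gh.
have [uph ph_unit] := phi_UT Gh.
rewrite !phiM // !phi_transv transv_conj // => /(mulIr ph_unit) eq_transv.
by rewrite -[LHS](transvE m) -eq_transv transvE.
Qed.

(* [t |-> tau t / tau 1] is a ring endomorphism of [R], hence the identity;
   multiplicativity comes from conjugating by [diag_corner m a]. *)
Lemma phi_diag_ratio h : G h -> diag_ratio (phi h) = diag_ratio h.
Proof.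
have tau0 : tau 0 = 0 by apply: (addIr (tau 0)); rewrite -tauD !add0r.
have tau_lin : forall t, tau t / tau 1 = t.
  apply: real_ring_endo_id => [s t|s t|]; last exact: divff tau1_neq0.
    by rewrite tauD mulrDl.
  have [->|s_neq0] := eqVneq s 0; first by rewrite mul0r tau0 !mul0r.
  have G_corner := UT_diag_corner m s_neq0.
  have := tau_conj t G_corner; have := tau_conj 1 G_corner.
  rewrite !diag_ratio_corner mulr1 => -> ->.
  by rewrite mulfK ?tau1_neq0 // mulrA.
move=> Gh; have := tau_conj 1 Gh; rewrite mulr1 => tau_ratio.
by have := tau_lin (diag_ratio h); rewrite tau_ratio mulfK ?tau1_neq0.
Qed.

End Automorphism.

Lemma twisted_conj_diag_ratio (R : realType) m
    (phi : 'M[R]_m.+2 -> 'M[R]_m.+2) x y :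
  (forall g, UT g -> UT (phi g)) ->
  (forall g, UT g -> diag_ratio (phi g) = diag_ratio g) ->
  UT x -> UT y -> twisted_conj (@UT R m.+2) phi x y ->
  diag_ratio y = diag_ratio x.
Proof.
move=> phi_UT phi_ratio [ux _] [uy _] [g Gg y_def].
have [ug _] := Gg; have [uphg phg_unit] := phi_UT _ Gg.
have : y *m phi g = g *m x by rewrite y_def mulmxKV.
move/(congr1 diag_ratio); rewrite !diag_ratioM // phi_ratio // mulrC.
by apply: mulfI; exact: diag_ratio_neq0.
Qed.

Lemma Reidemeister_infinite_of_invariant (R : realType) n (G : set 'M[R]_n)
    (phi : 'M[R]_n -> 'M[R]_n) T (c : 'M[R]_n -> T) (a : nat -> 'M[R]_n) :
  (forall x y, G x -> G y -> twisted_conj G phi x y -> c y = c x) ->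
  (forall k, G (a k)) -> (forall k, twisted_conj G phi (a k) (a k)) ->
  injective (c \o a) -> Reidemeister_infinite G phi.
Proof.
move=> c_inv Ga a_refl ca_inj classes_finite.
pose class k := [set y | G y /\ twisted_conj G phi (a k) y].
have class_inj : injective class.
  move=> k l class_kl; have : class k (a l) by rewrite class_kl.
  by case=> Gal /c_inv -/(_ (Ga k) Gal) /ca_inj.
apply: infinite_nat.
apply: sub_finite_set (finite_preimage (in2W class_inj) classes_finite).
by move=> k _; exists (a k).
Qed.

Theorem theorem5p3 (R : realType) (n : nat) :
  (2 <= n)%N -> top_R_infty (@UT R n).
Proof.
case: n => [|[|m]] // _ phi.
move=> [phi_UT phiM phi_cont [psi [psi_UT phiK psiK psi_cont]]].
have phi_ratio := phi_diag_ratio phi_UT phiM phi_cont psi_UT phiK psiK psi_cont.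
have G_corner k : UT (diag_corner m (k.+1%:R : R)).
  by apply: UT_diag_corner; rewrite pnatr_eq0.
apply: (@Reidemeister_infinite_of_invariant _ _ _ _ _ diag_ratio
  (fun k => diag_corner m k.+1%:R)) => // [x y|k|k l].
- exact: twisted_conj_diag_ratio.
- exists 1%:M; first exact: UT1.
  by rewrite mul1mx (endo_mx1 phi_UT phiM) invmx1 mulmx1.
- by rewrite /= !diag_ratio_corner => /eqP; rewrite eqr_nat eqSS => /eqP.
Qed.
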